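(* Let $\xi_m>0$, $\lambda>0$, $\mu\in(0,\xi_m]$. (i) For any $u_0>0$ define $$u_{n+1}=\frac{\lambda}{\xi_m}u_n\Big(\sqrt{\xi_m^2+u_n^2}-\sqrt{\mu^2+u_n^2}+\mu\ln\frac{\mu+\sqrt{\mu^2+u_n^2}}{u_n}\Big),\quad n\ge0 .$$ Then $(u_n)$ is monotone and converges to a positive limit $u_*$, which is the unique positive solution $\Delta_0$ of the zero-temperature equation $\frac{\xi_m}{\lambda}=\sqrt{\xi_m^2+\Delta_0^2}-\sqrt{\mu^2+\Delta_0^2}+\mu\ln\frac{\mu+\sqrt{\mu^2+\Delta_0^2}}{\Delta_0}$. (ii) For $T>0$ and any $u_0>0$ define $$u_{n+1}=\frac{\lambda}{\xi_m}u_n\Big(2T\ln\frac{\cosh(\sqrt{\xi_m^2+u_n^2}/2T)}{\cosh(\sqrt{\mu^2+u_n^2}/2T)}+\mu\int_0^{\mu}\tanh\Big(\frac{\sqrt{\xi^2+u_n^2}}{2T}\Big)\frac{d\xi}{\sqrt{\xi^2+u_n^2}}\Big),\quad n\ge0 .$$ Then $(u_n)$ is monotone and converges to a limit $u_*\ge0$. If $0<T<T_c$, $u_*>0$ is the unique positive solution $\Delta$ of the finite-temperature gap equation $$\frac{\xi_m}{\lambda}=2T\ln\frac{\cosh(\sqrt{\xi_m^2+\Delta^2}/2T)}{\cosh(\sqrt{\mu^2+\Delta^2}/2T)}+\mu\int_0^{\mu}\tanh\Big(\frac{\sqrt{\xi^2+\Delta^2}}{2T}\Big)\frac{d\xi}{\sqrt{\xi^2+\Delta^2}};$$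 if $T\ge T_c$, then $u_*=0$ (and this gap equation has no positive solution). (iii) For any $\tau_0>0$ define $$\tau_{n+1}=\frac{\lambda}{\xi_m}\tau_n\Big(2\tau_n\ln\frac{\cosh(\xi_m/2\tau_n)}{\cosh(\mu/2\tau_n)}+\mu\int_0^{\mu}\frac1\xi\tanh\Big(\frac{\xi}{2\tau_n}\Big)d\xi\Big),\quad n\ge0 .$$ Then $(\tau_n)$ is monotone and converges to $T_c$. In each case where the limit is positive (case (i), case (ii) with $T<T_c$, case (iii)), the convergence is linear: $\lim_{n\to\infty}\frac{u_{n+1}-u_*}{u_n-u_*}$ (resp. with $\tau$) exists and lies in $(0,1)$ (when $u_n\neq u_*$ for all $n$).
   Context: $T_c=T_c(\mu,\lambda)>0$ denotes the unique positive solution $T$ of $\frac{\xi_m}{\lambda}=2T\ln\frac{\cosh(\xi_m/2T)}{\cosh(\mu/2T)}+\mu\int_0^{\mu}\frac1\xi\tanh\big(\frac{\xi}{2T}\big)d\xi$. *)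

From Stdlib Require Import Reals Lra ClassicalEpsilon.
Open Scope R_scope.

(* Definite Riemann integral of f over [a,b] (the common value of RiemannInt
   for any integrability proof; arbitrary if f is not Riemann integrable). *)
Definition Rint (f : R -> R) (a b : R) : R :=
  epsilon (inhabits 0)
    (fun I => exists pr : Riemann_integrable f a b, RiemannInt pr = I).

Definition F0 (xm mu D : R) : R :=
  sqrt (xm^2 + D^2) - sqrt (mu^2 + D^2)
  + mu * ln ((mu + sqrt (mu^2 + D^2)) / D).

Definition FT (xm mu T D : R) : R :=
  2 * T * ln (cosh (sqrt (xm^2 + D^2) / (2 * T)) / cosh (sqrt (mu^2 + D^2) / (2 * T)))
  + mu * Rint (fun xi => tanh (sqrt (xi^2 + D^2) / (2 * T)) / sqrt (xi^2 + D^2)) 0 mu.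

(* Right-hand side of the critical-temperature equation (Delta = 0). *)
Definition Fc (xm mu T : R) : R :=
  2 * T * ln (cosh (xm / (2 * T)) / cosh (mu / (2 * T)))
  + mu * Rint (fun xi => / xi * tanh (xi / (2 * T))) 0 mu.

Definition is_Tc (xm lam mu Tc : R) : Prop :=
  0 < Tc /\ xm / lam = Fc xm mu Tc /\
  (forall T, 0 < T -> xm / lam = Fc xm mu T -> T = Tc).

Definition monotone (u : nat -> R) : Prop := Un_growing u \/ Un_decreasing u.

Definition linear_conv (u : nat -> R) (us : R) : Prop :=
  (forall n, u n <> us) ->
  exists L, 0 < L < 1 /\ Un_cv (fun n => (u (S n) - us) / (u n - us)) L.

(* Each iteration is u |-> c u F(u) with c = lam / xm and F the right-hand side of a gap
   equation: F0 or FT as functions of D, or Fc as a function of T.  In all three cases F is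
   strictly decreasing while u F(u) is strictly increasing on (0, oo).  So the map
   g(u) = c u F(u) is increasing, g(u) - u has the sign of 1 - c F(u), and the iterates move
   monotonically to the unique positive root of c F = 1, or to 0 when c F < 1 everywhere;
   moreover g'(p) = 1 + c p F'(p) at the fixed point p lies in (0, 1), which is the linear rate.

   For F0 and FT both properties come from writing F(D) = int_0^xm max(x, mu) phi(sqrt(x^2 + D^2)) dx
   with phi(y) = 1/y, resp. tanh(y/2T)/y: phi is positive and decreasing while y phi(y) is
   nondecreasing.  For Fc they come from tanh s / s being decreasing, i.e. from 2 s < sinh 2 s.
   Finally Fc(T) is the value of this integral at D = 0 and Fc(T) - 2 xm D / T <= FT(D) <= Fc(T);
   as Fc decreases, FT = xm / lam has a positive root exactly when Fc(T) > Fc(Tc) = xm / lam,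
   i.e. when T < Tc. *)

From Coquelicot Require Import Coquelicot.
From Stdlib Require Import Reals Lra Lia Ranalysis5 ClassicalEpsilon.
Open Scope R_scope.

Lemma continuity_pt_continuous (f : R -> R) x : continuity_pt f x -> continuous f x.
Proof. apply continuity_pt_filterlim. Qed.

Lemma continuity_pt_cst (c x : R) : continuity_pt (fun _ => c) x.
Proof. apply continuity_pt_const. now intros ? ?. Qed.

Lemma continuity_pt_id_mul (f : R -> R) x : continuity_pt f x -> continuity_pt (fun x => x * f x) x.
Proof. apply continuity_pt_mult, continuity_pt_id. Qed.

Lemma ex_derive_continuity_pt (f : R -> R) x : ex_derive f x -> continuity_pt f x.
Proof. intro H. apply continuity_pt_filterlim. exact (ex_derive_continuous f x H). Qed.

Lemma is_derive_continuity_pt (f : R -> R) x l : is_derive f x l -> continuity_pt f x.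
Proof. intro H. apply ex_derive_continuity_pt. exists l; exact H. Qed.

Lemma is_derive_eq (f : R -> R) (x l l' : R) : l = l' -> is_derive f x l -> is_derive f x l'.
Proof. now intros <-. Qed.

Lemma ex_RInt_continuity_pt (f : R -> R) a b : a <= b ->
  (forall x, a <= x <= b -> continuity_pt f x) -> ex_RInt f a b.
Proof.
  intros Hab Hf. apply (@ex_RInt_continuous R_CompleteNormedModule). intros x Hx.
  apply continuity_pt_continuous, Hf. rewrite Rmin_left, Rmax_right in Hx; lra.
Qed.

Lemma le_of_deriv_nonneg (f df : R -> R) a b : a <= b ->
  (forall x, a <= x <= b -> is_derive f x (df x)) ->
  (forall x, a <= x <= b -> 0 <= df x) -> f a <= f b.
Proof.
  intros Hab Hd Hnn. destruct (MVT_gen f a b df) as [c [Hc E]];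
    rewrite ?Rmin_left, ?Rmax_right in * by lra.
  - intros x Hx. apply Hd; lra.
  - intros x Hx. apply (is_derive_continuity_pt _ _ (df x)), Hd; lra.
  - assert (0 <= df c * (b - a)) by (apply Rmult_le_pos; [apply Hnn|]; lra). lra.
Qed.

Lemma lt_of_deriv_pos (f df : R -> R) a b : a < b ->
  (forall x, a <= x <= b -> is_derive f x (df x)) ->
  (forall x, a < x <= b -> 0 < df x) ->
  (forall x, a <= x <= b -> 0 <= df x) -> f a < f b.
Proof.
  intros Hab Hd Hpos Hnn. apply Rle_lt_trans with (f ((a + b) / 2)).
  - apply (le_of_deriv_nonneg f df); intros; try apply Hd; try apply Hnn; lra.
  - apply (incr_function_le f ((a + b) / 2) b df); simpl; intros; try lra.
    + apply Hd; lra.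
    + apply Hpos; lra.
Qed.

Lemma decreasing_of_deriv_neg (F dF : R -> R) :
  (forall x, 0 < x -> is_derive F x (dF x)) -> (forall x, 0 < x -> dF x < 0) ->
  forall a b, 0 < a -> a < b -> F b < F a.
Proof.
  intros Hd Hneg a b Ha Hab.
  assert (- F a < - F b); [|lra].
  apply (incr_function (fun x => - F x) 0 p_infty (fun x => - dF x)); simpl; auto.
  - intros x Hx _. exact (is_derive_opp F x _ (Hd x Hx)).
  - intros x Hx _. specialize (Hneg x Hx). lra.
Qed.

(** * Hyperbolic functions *)

Lemma cosh_pos x : 0 < cosh x.
Proof. unfold cosh. pose proof (exp_pos x). pose proof (exp_pos (-x)). lra. Qed.

Lemma cosh_sub_1 x : cosh x - 1 = (exp x - 1) ^ 2 / (2 * exp x).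
Proof. unfold cosh. rewrite exp_Ropp. pose proof (exp_pos x). field. lra. Qed.

Lemma cosh_ge_1 x : 1 <= cosh x.
Proof.
  pose proof (cosh_sub_1 x). pose proof (exp_pos x).
  assert (0 <= (exp x - 1) ^ 2 / (2 * exp x)) by (apply Rdiv_le_0_compat; [apply pow2_ge_0 | lra]). lra.
Qed.

Lemma cosh_gt_1 x : x <> 0 -> 1 < cosh x.
Proof.
  intro Hx. pose proof (cosh_sub_1 x). pose proof (exp_pos x).
  assert (exp x <> 1) by (intro E; apply Hx, exp_inv; rewrite exp_0; exact E).
  assert (0 < (exp x - 1) ^ 2 / (2 * exp x)).
  { apply Rdiv_lt_0_compat; [apply pow2_gt_0|]; lra. }
  lra.
Qed.

Lemma cosh2_sub_sinh2 x : cosh x ^ 2 - sinh x ^ 2 = 1.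
Proof. unfold cosh, sinh. rewrite exp_Ropp. pose proof (exp_pos x). field. lra. Qed.

Lemma sinh_pos x : 0 < x -> 0 < sinh x.
Proof. intro. rewrite <- sinh_0. now apply sinh_lt. Qed.

Lemma sinh_double x : sinh (2 * x) = 2 * sinh x * cosh x.
Proof.
  unfold sinh, cosh. replace (2 * x) with (x + x) by ring.
  replace (- (x + x)) with (- x + - x) by ring. rewrite !exp_plus, !exp_Ropp.
  pose proof (exp_pos x). field. lra.
Qed.

Lemma is_derive_cosh x : is_derive cosh x (sinh x).
Proof. apply is_derive_Reals, derivable_pt_lim_cosh. Qed.

Lemma is_derive_tanh x : is_derive tanh x (/ cosh x ^ 2).
Proof.
  pose proof (cosh_pos x). unfold tanh.
  apply (is_derive_eq _ _ ((cosh x * cosh x - sinh x * sinh x) / Rsqr (cosh x))).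
  { replace (cosh x * cosh x - sinh x * sinh x) with 1 by (rewrite <- (cosh2_sub_sinh2 x); ring).
    unfold Rsqr. field. lra. }
  apply is_derive_Reals, (derivable_pt_lim_div sinh cosh).
  - apply derivable_pt_lim_sinh.
  - apply derivable_pt_lim_cosh.
  - lra.
Qed.

Lemma tanh_0 : tanh 0 = 0.
Proof. unfold tanh. rewrite sinh_0. unfold Rdiv. ring. Qed.

Lemma tanh_pos x : 0 < x -> 0 < tanh x.
Proof. intro. apply Rdiv_lt_0_compat; [apply sinh_pos | apply cosh_pos]; auto. Qed.

Lemma tanh_lt_1 x : tanh x < 1.
Proof.
  pose proof (cosh_pos x). pose proof (exp_pos (- x)).
  assert (sinh x < cosh x) by (unfold sinh, cosh; lra).
  unfold tanh. apply (Rmult_lt_reg_r (cosh x)); auto.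
  unfold Rdiv. rewrite Rmult_assoc, Rinv_l; lra.
Qed.

Lemma tanh_increasing x y : x < y -> tanh x < tanh y.
Proof.
  intro Hxy. apply (incr_function tanh m_infty p_infty (fun x => / cosh x ^ 2)); simpl; auto.
  - intros; apply is_derive_tanh.
  - intros z _ _. pose proof (cosh_pos z). apply Rinv_0_lt_compat. nra.
Qed.

Lemma inv_cosh2_le_1 x : / cosh x ^ 2 <= 1.
Proof.
  pose proof (cosh_ge_1 x). rewrite <- Rinv_1. apply Rinv_le_contravar; nra.
Qed.

Lemma inv_cosh2_lt_1 x : x <> 0 -> / cosh x ^ 2 < 1.
Proof.
  intro Hx. pose proof (cosh_gt_1 x Hx). rewrite <- Rinv_1. apply Rinv_lt_contravar; nra.
Qed.

Lemma tanh_lt_id x : 0 < x -> tanh x < x.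
Proof.
  intro Hx. assert (H : 0 - tanh 0 < x - tanh x).
  { apply (lt_of_deriv_pos (fun x => x - tanh x) (fun x => 1 - / cosh x ^ 2)); auto.
    - intros y _. exact (is_derive_minus _ _ _ _ _ (is_derive_id y) (is_derive_tanh y)).
    - intros y Hy. pose proof (inv_cosh2_lt_1 y). lra.
    - intros y _. pose proof (inv_cosh2_le_1 y). lra. }
  rewrite tanh_0 in H. lra.
Qed.

Lemma sinh_gt_id x : 0 < x -> x < sinh x.
Proof.
  intro Hx. assert (H : sinh 0 - 0 < sinh x - x).
  { apply (lt_of_deriv_pos (fun x => sinh x - x) (fun x => cosh x - 1)); auto.
    - intros y _. apply (is_derive_minus sinh (fun x => x)).
      + apply is_derive_Reals, derivable_pt_lim_sinh.
      + exact (is_derive_id y).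
    - intros y Hy. pose proof (cosh_gt_1 y). lra.
    - intros y _. pose proof (cosh_ge_1 y). lra. }
  rewrite sinh_0 in H. lra.
Qed.

(* Equivalent to [2 s < sinh (2 s)]; it is what makes [tanh s / s] decreasing. *)
Lemma id_div_cosh2_lt_tanh s : 0 < s -> s / cosh s ^ 2 < tanh s.
Proof.
  intro Hs. pose proof (cosh_pos s).
  assert (s < sinh s * cosh s).
  { pose proof (sinh_gt_id (2 * s)) as Hsinh. rewrite sinh_double in Hsinh. lra. }
  unfold tanh. apply (Rmult_lt_reg_r (cosh s ^ 2)); [nra|].
  replace (s / cosh s ^ 2 * cosh s ^ 2) with s by (field; lra).
  replace (sinh s / cosh s * cosh s ^ 2) with (sinh s * cosh s) by (field; lra). lra.
Qed.

Lemma is_derive_ln_cosh y : is_derive (fun y => ln (cosh y)) y (tanh y).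
Proof.
  pose proof (cosh_pos y).
  apply (is_derive_eq _ _ (sinh y * / cosh y)); [reflexivity|].
  apply (is_derive_comp ln cosh y); [apply is_derive_Reals, derivable_pt_lim_ln; auto|].
  apply is_derive_cosh.
Qed.

(* [tanh s / s], extended continuously by its limit [1] at [0]. *)
Definition tanhc (s : R) : R := if Req_EM_T s 0 then 1 else tanh s / s.

Definition tanhc' (s : R) : R := (s / cosh s ^ 2 - tanh s) / s ^ 2.

Lemma tanhc_eq s : s <> 0 -> tanhc s = tanh s / s.
Proof. intro Hs. unfold tanhc. now destruct (Req_EM_T s 0). Qed.

Lemma tanhc_0 : tanhc 0 = 1.
Proof. unfold tanhc. now destruct (Req_EM_T 0 0). Qed.

Lemma mul_tanhc s : s * tanhc s = tanh s.
Proof.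
  destruct (Req_dec s 0) as [->|Hs].
  - rewrite tanh_0. ring.
  - rewrite tanhc_eq by auto. field. auto.
Qed.

Lemma tanhc_pos s : 0 <= s -> 0 < tanhc s.
Proof.
  intro Hs. destruct (Req_dec s 0) as [->|Hs0]; [rewrite tanhc_0; lra|].
  rewrite tanhc_eq by auto. apply Rdiv_lt_0_compat; [apply tanh_pos|]; lra.
Qed.

Lemma is_derive_tanhc s : s <> 0 -> is_derive tanhc s (tanhc' s).
Proof.
  intro Hs. pose proof (cosh_pos s).
  apply (is_derive_ext_loc (fun s => tanh s * / s)).
  - assert (Hd : 0 < Rabs s) by (apply Rabs_pos_lt; auto).
    exists (mkposreal _ Hd). intros y Hy. simpl in Hy.
    assert (y <> 0).
    { intros ->. unfold ball in Hy; simpl in Hy. unfold AbsRing_ball, abs, minus, plus, opp in Hy.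
      simpl in Hy. rewrite Rplus_0_l, Rabs_Ropp in Hy. lra. }
    rewrite tanhc_eq; auto.
  - apply (is_derive_eq _ _ (/ cosh s ^ 2 * / s + tanh s * (- 1 / s ^ 2))).
    { unfold tanhc'. field. split; [lra | auto]. }
    apply (is_derive_mult tanh (fun s => / s)).
    + apply is_derive_tanh.
    + exact (is_derive_inv (fun s => s) s 1 (is_derive_id s) Hs).
    + intros; apply Rmult_comm.
Qed.

Lemma continuity_pt_tanhc s : continuity_pt tanhc s.
Proof.
  destruct (Req_dec s 0) as [->|Hs].
  2: exact (is_derive_continuity_pt _ _ _ (is_derive_tanhc s Hs)).
  pose proof (is_derive_tanh 0) as Hd. rewrite cosh_0, pow1, Rinv_1 in Hd.
  apply is_derive_Reals in Hd.
  intros e He. destruct (Hd e He) as [d Hdd]. exists d. split; [apply cond_pos|].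
  intros x [_ Hx]. simpl in *. unfold R_dist in *. rewrite tanhc_0.
  destruct (Req_dec x 0) as [->|Hx0]; [rewrite tanhc_0, Rminus_diag, Rabs_R0; lra|].
  rewrite tanhc_eq by auto. rewrite Rminus_0_r in Hx.
  specialize (Hdd x Hx0 Hx). rewrite Rplus_0_l, tanh_0, Rminus_0_r in Hdd. exact Hdd.
Qed.

Lemma continuity_pt_tanhc' s : s <> 0 -> continuity_pt tanhc' s.
Proof.
  intro Hs. pose proof (cosh_pos s). unfold tanhc'.
  assert (Hcosh : continuity_pt cosh s) by exact (is_derive_continuity_pt _ _ _ (is_derive_cosh s)).
  apply continuity_pt_div; [apply continuity_pt_minus; [apply continuity_pt_div|] | | ].
  - apply continuity_pt_id.
  - apply continuity_pt_mult; [exact Hcosh|].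
    apply continuity_pt_mult; [exact Hcosh | apply continuity_pt_cst].
  - simpl. nra.
  - exact (is_derive_continuity_pt _ _ _ (is_derive_tanh s)).
  - apply continuity_pt_mult; [apply continuity_pt_id|].
    apply continuity_pt_mult; [apply continuity_pt_id | apply continuity_pt_cst].
  - simpl. intro E. apply Hs. nra.
Qed.

Lemma tanhc'_neg s : 0 < s -> tanhc' s < 0.
Proof.
  intro Hs. pose proof (id_div_cosh2_lt_tanh s Hs). unfold tanhc'.
  apply Rdiv_neg_pos; [lra | apply pow_lt; lra].
Qed.

Lemma tanhc_add_mul_tanhc' s : s <> 0 -> tanhc s + s * tanhc' s = / cosh s ^ 2.
Proof.
  intro Hs. pose proof (cosh_pos s). rewrite tanhc_eq by auto. unfold tanhc'.
  field. split; lra.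
Qed.

Lemma tanhc_decreasing a b : 0 <= a -> a < b -> tanhc b < tanhc a.
Proof.
  intros Ha Hab. destruct (Req_dec a 0) as [->|Ha0].
  - rewrite tanhc_0, tanhc_eq by lra. pose proof (tanh_lt_id b Hab).
    apply (Rmult_lt_reg_r b); [lra|]. field_simplify; lra.
  - apply (decreasing_of_deriv_neg tanhc tanhc'); auto; try lra.
    + intros x Hx. apply is_derive_tanhc. lra.
    + apply tanhc'_neg.
Qed.

(** * Iterating an increasing map *)

Lemma Un_cv_shift (u : nat -> R) l : Un_cv u l -> Un_cv (fun n => u (S n)) l.
Proof. intros H e He. destruct (H e He) as [N HN]. exists N. intros n Hn. apply HN. lia. Qed.

Lemma Un_cv_lower_bound (u : nat -> R) l m : (forall n, m <= u n) -> Un_cv u l -> m <= l.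
Proof.
  intros Hm Hu. apply (Rle_cv_lim (Un := fun _ => m) Hm); auto.
  intros e He. exists 0%nat. intros. rewrite R_dist_eq. lra.
Qed.

Lemma Un_cv_upper_bound (u : nat -> R) l M : (forall n, u n <= M) -> Un_cv u l -> l <= M.
Proof.
  intros HM Hu. apply (Rle_cv_lim (Vn := fun _ => M) HM); auto.
  intros e He. exists 0%nat. intros. rewrite R_dist_eq. lra.
Qed.

Lemma growing_bounded_cv (u : nat -> R) M : Un_growing u -> (forall n, u n <= M) ->
  exists l, Un_cv u l /\ u 0%nat <= l <= M.
Proof.
  intros Hg HM. destruct (growing_cv u Hg) as [l Hl].
  { exists M. intros x [n ->]. apply HM. }
  exists l. split; auto. split.
  - apply (Un_cv_lower_bound u); auto. intro n. induction n; [lra|]. pose proof (Hg n). lra.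
  - apply (Un_cv_upper_bound u); auto.
Qed.

Lemma decreasing_bounded_cv (u : nat -> R) m : Un_decreasing u -> (forall n, m <= u n) ->
  exists l, Un_cv u l /\ m <= l <= u 0%nat.
Proof.
  intros Hd Hm. destruct (decreasing_cv u Hd) as [l Hl].
  { exists (- m). intros x [n ->]. unfold opp_seq. pose proof (Hm n). lra. }
  exists l. split; auto. split.
  - apply (Un_cv_lower_bound u); auto.
  - apply (Un_cv_upper_bound u); auto. intro n. induction n; [lra|]. pose proof (Hd n). lra.
Qed.

Section Iteration.
Variables (g : R -> R) (u : nat -> R).
Hypothesis u_S : forall n, u (S n) = g (u n).
Hypothesis g_cont : forall x, 0 < x -> continuity_pt g x.
Hypothesis u0_pos : 0 < u 0%nat.

Lemma iteration_limit_fixed l : 0 < l -> Un_cv u l -> g l = l.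
Proof.
  intros Hl Hu. apply (UL_sequence (fun n => u (S n))); [|now apply Un_cv_shift].
  apply (Un_cv_ext (fun n => g (u n))); [intro; symmetry; apply u_S|].
  now apply continuity_seq; [apply g_cont|].
Qed.

Variable p : R.
Hypothesis p_pos : 0 < p.
Hypothesis g_mono : forall x y, 0 < x -> x <= y -> g x <= g y.
Hypothesis g_p : g p = p.
Hypothesis g_below : forall x, 0 < x < p -> x < g x.
Hypothesis g_above : forall x, p < x -> g x < x.

Lemma iteration_step_below x : 0 < x <= p -> x <= g x <= p.
Proof.
  intro Hx. split.
  - destruct (Req_dec x p) as [->|]; [lra|]. left; apply g_below; lra.
  - rewrite <- g_p. apply g_mono; lra.
Qed.

Lemma iteration_step_above x : p <= x -> p <= g x <= x.
Proof.
  intro Hx. split.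
  - rewrite <- g_p at 1. apply g_mono; lra.
  - destruct (Req_dec x p) as [->|]; [lra|]. left; apply g_above; lra.
Qed.

Lemma iteration_cv_fixed_point : monotone u /\ Un_cv u p.
Proof.
  destruct (Rle_lt_dec (u 0%nat) p) as [Hle|Hlt].
  - assert (Hinv : forall n, u 0%nat <= u n <= p).
    { induction n; [lra|]. rewrite u_S. pose proof (iteration_step_below (u n)). lra. }
    assert (Hg : Un_growing u).
    { intro n. rewrite u_S. apply iteration_step_below. pose proof (Hinv n). lra. }
    destruct (growing_bounded_cv u p Hg (fun n => proj2 (Hinv n))) as [l [Hl Hlb]].
    split; [now left|].
    assert (Hfix : g l = l) by (apply iteration_limit_fixed; auto; lra).
    destruct (Req_dec l p) as [<-|]; auto.
    assert (l < g l) by (apply g_below; lra). lra.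
  - assert (Hinv : forall n, p <= u n <= u 0%nat).
    { induction n; [lra|]. rewrite u_S. pose proof (iteration_step_above (u n)). lra. }
    assert (Hd : Un_decreasing u).
    { intro n. rewrite u_S. apply iteration_step_above, Hinv. }
    destruct (decreasing_bounded_cv u p Hd (fun n => proj1 (Hinv n))) as [l [Hl Hlb]].
    split; [now right|].
    assert (Hfix : g l = l) by (apply iteration_limit_fixed; auto; lra).
    destruct (Req_dec l p) as [<-|]; auto.
    assert (g l < l) by (apply g_above; lra). lra.
Qed.

End Iteration.

Lemma iteration_cv_zero (g : R -> R) (u : nat -> R) :
  (forall n, u (S n) = g (u n)) -> (forall x, 0 < x -> continuity_pt g x) -> 0 < u 0%nat ->
  (forall x, 0 < x -> 0 < g x < x) -> monotone u /\ Un_cv u 0.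
Proof.
  intros u_S g_cont u0_pos g_dec.
  assert (Hpos : forall n, 0 < u n).
  { induction n; auto. rewrite u_S. now apply g_dec. }
  assert (Hd : Un_decreasing u).
  { intro n. rewrite u_S. pose proof (g_dec (u n) (Hpos n)). lra. }
  destruct (decreasing_bounded_cv u 0 Hd (fun n => Rlt_le _ _ (Hpos n))) as [l [Hl Hlb]].
  split; [now right|].
  destruct (Req_dec l 0) as [<-|]; auto.
  assert (Hfix : g l = l) by (apply (iteration_limit_fixed g u); auto; lra).
  pose proof (g_dec l). lra.
Qed.

Lemma linear_conv_of_derive (g : R -> R) (u : nat -> R) p d :
  (forall n, u (S n) = g (u n)) -> Un_cv u p -> g p = p ->
  is_derive g p d -> 0 < d < 1 -> linear_conv u p.
Proof.
  intros u_S Hcv g_p Hd Hd01 Hne. exists d. split; auto.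
  apply is_derive_Reals in Hd.
  intros e He. destruct (Hd e He) as [del Hdel].
  destruct (Hcv del (cond_pos del)) as [N HN].
  exists N. intros n Hn. specialize (HN n Hn). unfold R_dist in *.
  assert (h0 : u n - p <> 0) by (specialize (Hne n); lra).
  specialize (Hdel (u n - p) h0 HN).
  replace (p + (u n - p)) with (u n) in Hdel by ring.
  rewrite u_S. rewrite g_p in Hdel. exact Hdel.
Qed.

Section GapMap.
Variables (F dF : R -> R) (c : R).
Hypothesis c_pos : 0 < c.
Hypothesis F_deriv : forall D, 0 < D -> is_derive F D (dF D).
Hypothesis dF_neg : forall D, 0 < D -> dF D < 0.

Lemma gap_fun_injective a b : 0 < a -> 0 < b -> F a = F b -> a = b.
Proof.
  intros Ha Hb E. destruct (Rtotal_order a b) as [H|[H|H]]; auto.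
  - pose proof (decreasing_of_deriv_neg F dF F_deriv dF_neg a b Ha H). lra.
  - pose proof (decreasing_of_deriv_neg F dF F_deriv dF_neg b a Hb H). lra.
Qed.

Hypothesis mul_F_deriv_pos : forall D, 0 < D -> 0 < F D + D * dF D.

Definition gap_map (x : R) : R := c * x * F x.

Lemma is_derive_gap_map x : 0 < x -> is_derive gap_map x (c * (F x + x * dF x)).
Proof.
  intro Hx. unfold gap_map. apply (is_derive_eq _ _ (c * 1 * F x + c * x * dF x)); [ring|].
  apply (is_derive_mult (fun x => c * x) F); auto.
  - exact (is_derive_scal _ x c 1 (is_derive_id x)).
  - intros; apply Rmult_comm.
Qed.

Lemma gap_map_nondecreasing x y : 0 < x -> x <= y -> gap_map x <= gap_map y.
Proof.
  intros Hx Hxy. apply (le_of_deriv_nonneg gap_map (fun x => c * (F x + x * dF x))); auto.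
  - intros z Hz. apply is_derive_gap_map. lra.
  - intros z Hz. pose proof (mul_F_deriv_pos z). apply Rmult_le_pos; lra.
Qed.

Lemma gap_iteration_cv (u : nat -> R) p :
  0 < p -> c * F p = 1 -> 0 < u 0%nat -> (forall n, u (S n) = c * u n * F (u n)) ->
  monotone u /\ Un_cv u p /\ linear_conv u p.
Proof.
  intros Hp Hfix Hu0 u_S.
  assert (g_p : gap_map p = p)
    by (unfold gap_map; replace (c * p * F p) with (p * (c * F p)) by ring; rewrite Hfix; ring).
  assert (Hcont : forall x, 0 < x -> continuity_pt gap_map x)
    by (intros x Hx; exact (is_derive_continuity_pt _ _ _ (is_derive_gap_map x Hx))).
  destruct (iteration_cv_fixed_point gap_map u u_S Hcont Hu0 p Hp gap_map_nondecreasing g_p)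
    as [Hm Hcv].
  - intros x Hx. pose proof (decreasing_of_deriv_neg F dF F_deriv dF_neg x p ltac:(lra) ltac:(lra)).
    assert (1 < c * F x) by (rewrite <- Hfix; apply Rmult_lt_compat_l; lra).
    unfold gap_map. nra.
  - intros x Hx. pose proof (decreasing_of_deriv_neg F dF F_deriv dF_neg p x ltac:(lra) ltac:(lra)).
    assert (c * F x < 1) by (rewrite <- Hfix; apply Rmult_lt_compat_l; lra).
    unfold gap_map. nra.
  - repeat split; auto.
    apply (linear_conv_of_derive gap_map u p (c * (F p + p * dF p))); auto.
    { apply is_derive_gap_map; auto. }
    pose proof (dF_neg p Hp). pose proof (mul_F_deriv_pos p Hp).
    assert (0 < c * p) by (apply Rmult_lt_0_compat; auto).
    split; [apply Rmult_lt_0_compat; auto | nra].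
Qed.

Lemma gap_iteration_cv_zero (u : nat -> R) :
  (forall D, 0 < D -> 0 < F D) -> (forall D, 0 < D -> c * F D < 1) ->
  0 < u 0%nat -> (forall n, u (S n) = c * u n * F (u n)) ->
  monotone u /\ Un_cv u 0.
Proof.
  intros F_pos cF_lt_1 Hu0 u_S.
  apply (iteration_cv_zero gap_map u u_S); auto.
  - intros x Hx. exact (is_derive_continuity_pt _ _ _ (is_derive_gap_map x Hx)).
  - intros x Hx. pose proof (F_pos x Hx). pose proof (cF_lt_1 x Hx). unfold gap_map.
    split; [apply Rmult_lt_0_compat; [apply Rmult_lt_0_compat|]|]; nra.
Qed.

End GapMap.

(** * The gap integral *)

Lemma RInt_add_scal (f g : R -> R) (c a b : R) : ex_RInt f a b -> ex_RInt g a b ->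
  RInt (fun x => f x + c * g x) a b = RInt f a b + c * RInt g a b.
Proof.
  intros Hf Hg. apply is_RInt_unique.
  apply (@is_RInt_plus R_NormedModule f (fun x => c * g x)).
  - exact (@RInt_correct R_CompleteNormedModule f a b Hf).
  - apply (@is_RInt_scal R_NormedModule g a b c).
    exact (@RInt_correct R_CompleteNormedModule g a b Hg).
Qed.

Lemma RInt_scal_R (f : R -> R) (c a b : R) : ex_RInt f a b ->
  RInt (fun x => c * f x) a b = c * RInt f a b.
Proof.
  intro Hf. apply is_RInt_unique, (@is_RInt_scal R_NormedModule f a b c).
  exact (@RInt_correct R_CompleteNormedModule f a b Hf).
Qed.

Lemma RInt_const_R (a b c : R) : RInt (fun _ => c) a b = c * (b - a).
Proof. rewrite RInt_const. unfold scal; simpl; unfold mult; simpl. ring. Qed.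

Lemma RInt_of_is_derive (f df : R -> R) (a b : R) : a <= b ->
  (forall x, a <= x <= b -> is_derive f x (df x)) ->
  (forall x, a <= x <= b -> continuity_pt df x) ->
  RInt df a b = f b - f a.
Proof.
  intros Hab Hd Hc. apply is_RInt_unique, (@is_RInt_derive R_CompleteNormedModule f df a b).
  - intros x Hx. rewrite Rmin_left, Rmax_right in Hx by lra. apply Hd; auto.
  - intros x Hx. rewrite Rmin_left, Rmax_right in Hx by lra. apply continuity_pt_continuous, Hc; auto.
Qed.

Lemma ex_RInt_continuity_pt_all (f : R -> R) a b : (forall x, continuity_pt f x) -> ex_RInt f a b.
Proof.
  intros Hf. apply (@ex_RInt_continuous R_CompleteNormedModule). intros; apply continuity_pt_continuous, Hf.
Qed.

Definition energy (D x : R) : R := sqrt (x ^ 2 + D ^ 2).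

Lemma energy_pos D x : 0 < x ^ 2 + D ^ 2 -> 0 < energy D x.
Proof. intro. now apply sqrt_lt_R0. Qed.

Lemma energy_sqr D x : energy D x ^ 2 = x ^ 2 + D ^ 2.
Proof. unfold energy. rewrite pow2_sqrt; nra. Qed.

Lemma energy_ge_D D x : 0 <= D -> D <= energy D x.
Proof. intro. unfold energy. rewrite <- (sqrt_pow2 D) at 1 by auto. apply sqrt_le_1_alt. nra. Qed.

Lemma energy_ge_x D x : 0 <= x -> x <= energy D x.
Proof. intro. unfold energy. rewrite <- (sqrt_pow2 x) at 1 by auto. apply sqrt_le_1_alt. nra. Qed.

Lemma energy_0_l x : 0 <= x -> energy 0 x = x.
Proof. intro. unfold energy. rewrite pow_i, Rplus_0_r by lia. now apply sqrt_pow2. Qed.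

Lemma energy_0_r D : 0 <= D -> energy D 0 = D.
Proof. intro. unfold energy. rewrite pow_i, Rplus_0_l by lia. now apply sqrt_pow2. Qed.

Lemma is_derive_energy_D D x : 0 < D -> is_derive (fun z => energy z x) D (D / energy D x).
Proof.
  intro HD. pose proof (energy_pos D x ltac:(nra)). unfold energy in *.
  auto_derive; [nra|]. simpl in *. field. lra.
Qed.

Lemma is_derive_energy_x D x : 0 < x ^ 2 + D ^ 2 -> is_derive (energy D) x (x / energy D x).
Proof.
  intro Hs. pose proof (energy_pos D x Hs). unfold energy in *.
  auto_derive; [nra|]. simpl in *. field. lra.
Qed.

Lemma continuity_pt_energy D x : continuity_pt (energy D) x.
Proof.
  apply (continuity_pt_comp (fun z => z ^ 2 + D ^ 2) sqrt).
  - apply ex_derive_continuity_pt. auto_derive. auto.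
  - apply continuity_pt_sqrt. nra.
Qed.

Lemma continuity_2d_pt_energy D x : continuity_2d_pt energy D x.
Proof.
  apply (continuity_1d_2d_pt_comp sqrt (fun u v => v ^ 2 + u ^ 2)); [apply continuity_pt_sqrt; nra|].
  apply continuity_2d_pt_plus.
  - apply (continuity_2d_pt_ext (fun u v => v * v)); [intros; ring|].
    apply continuity_2d_pt_mult; apply continuity_2d_pt_id2.
  - apply (continuity_2d_pt_ext (fun u v => u * u)); [intros; ring|].
    apply continuity_2d_pt_mult; apply continuity_2d_pt_id1.
Qed.

Lemma locally_pos D : 0 < D -> locally D (fun y => 0 < y).
Proof.
  intro HD. exists (mkposreal D HD). intros y Hy. simpl in Hy.
  unfold ball in Hy; simpl in Hy. unfold AbsRing_ball, abs, minus, plus, opp in Hy; simpl in Hy.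
  apply Rabs_def2 in Hy. lra.
Qed.

Lemma is_derive_pos_ext (F G : R -> R) D d : 0 < D -> (forall x, 0 < x -> F x = G x) ->
  is_derive G D d -> is_derive F D d.
Proof.
  intros HD E H. apply (is_derive_ext_loc G F); auto.
  apply (filter_imp (fun y => 0 < y)); [intros; symmetry; auto | now apply locally_pos].
Qed.

Section GapIntegral.
Variables (mu xm : R) (phi dphi : R -> R).
Hypothesis mu_pos : 0 < mu.
Hypothesis mu_le_xm : mu <= xm.
Hypothesis phi_deriv : forall y, 0 < y -> is_derive phi y (dphi y).
Hypothesis dphi_cont : forall y, 0 < y -> continuity_pt dphi y.

(* [max x mu], written so that its continuity is immediate. *)
Definition weight (x : R) : R := (x + mu + Rabs (x - mu)) / 2.

Lemma weight_le_mu x : x <= mu -> weight x = mu.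
Proof. intro. unfold weight. rewrite Rabs_left1 by lra. field. Qed.

Lemma weight_ge_mu x : mu <= x -> weight x = x.
Proof. intro. unfold weight. rewrite Rabs_right by lra. field. Qed.

Lemma mu_le_weight x : mu <= weight x.
Proof. destruct (Rle_dec x mu); [rewrite weight_le_mu | rewrite weight_ge_mu]; lra. Qed.

Lemma weight_le x : x <= xm -> weight x <= xm.
Proof. intro. destruct (Rle_dec x mu); [rewrite weight_le_mu | rewrite weight_ge_mu]; lra. Qed.

Lemma continuity_pt_weight x : continuity_pt weight x.
Proof.
  unfold weight. apply continuity_pt_div; [|apply continuity_pt_cst | lra].
  apply continuity_pt_plus; [apply ex_derive_continuity_pt; auto_derive; auto|].
  apply (continuity_pt_comp (fun x => x - mu) Rabs); [|apply Rcontinuity_abs].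
  apply ex_derive_continuity_pt; auto_derive; auto.
Qed.

Lemma continuity_pt_phi y : 0 < y -> continuity_pt phi y.
Proof. intro Hy. exact (is_derive_continuity_pt _ _ _ (phi_deriv y Hy)). Qed.

Lemma continuity_pt_phi_energy D x : 0 < D -> continuity_pt (fun x => phi (energy D x)) x.
Proof.
  intro HD. apply (continuity_pt_comp (energy D) phi); [apply continuity_pt_energy|].
  apply continuity_pt_phi, energy_pos. nra.
Qed.

Definition gap_integrand (D x : R) : R := weight x * phi (energy D x).

Definition gap_integrand_dD (D x : R) : R := weight x * (dphi (energy D x) * (D / energy D x)).

(* With [phi y = tanh (y / 2T) / y] this is the right-hand side of the gap equation. *)
Definition gap_integral (D : R) : R := RInt (gap_integrand D) 0 xm.

Definition gap_integral_dD (D : R) : R := RInt (gap_integrand_dD D) 0 xm.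

Lemma continuity_pt_gap_integrand D x : 0 < D -> continuity_pt (gap_integrand D) x.
Proof.
  intro HD. apply continuity_pt_mult; [apply continuity_pt_weight | now apply continuity_pt_phi_energy].
Qed.

Lemma continuity_pt_gap_integrand_dD D x : 0 < D -> continuity_pt (gap_integrand_dD D) x.
Proof.
  intro HD. pose proof (energy_pos D x ltac:(nra)).
  apply continuity_pt_mult; [apply continuity_pt_weight | apply continuity_pt_mult].
  - apply (continuity_pt_comp (energy D) dphi); [apply continuity_pt_energy | auto].
  - apply continuity_pt_div; [apply continuity_pt_cst | apply continuity_pt_energy | lra].
Qed.

Lemma is_derive_gap_integrand D x : 0 < D -> is_derive (fun z => gap_integrand z x) D (gap_integrand_dD D x).
Proof.
  intro HD. apply is_derive_scal.
  apply (is_derive_eq _ _ (D / energy D x * dphi (energy D x))); [ring|].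
  apply (is_derive_comp phi (fun z => energy z x)); [|now apply is_derive_energy_D].
  apply phi_deriv, energy_pos. nra.
Qed.

Lemma continuity_2d_pt_gap_integrand_dD D t : 0 < D ->
  continuity_2d_pt (fun u v => gap_integrand_dD u v) D t.
Proof.
  intro HD. pose proof (energy_pos D t ltac:(nra)).
  apply continuity_2d_pt_mult.
  { apply (continuity_1d_2d_pt_comp weight (fun u v => v));
      [apply continuity_pt_weight | apply continuity_2d_pt_id2]. }
  apply continuity_2d_pt_mult.
  - apply (continuity_1d_2d_pt_comp dphi energy); [auto | apply continuity_2d_pt_energy].
  - apply continuity_2d_pt_mult; [apply continuity_2d_pt_id1|].
    apply continuity_2d_pt_inv; [apply continuity_2d_pt_energy | lra].
Qed.

Lemma is_derive_gap_integral D : 0 < D -> is_derive gap_integral D (gap_integral_dD D).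
Proof.
  intro HD. unfold gap_integral, gap_integral_dD.
  rewrite (RInt_ext (gap_integrand_dD D) (fun t => Derive (fun u => gap_integrand u t) D)).
  2: { intros. symmetry. apply is_derive_unique. now apply is_derive_gap_integrand. }
  apply (is_derive_RInt_param (fun u t => gap_integrand u t)).
  - apply (filter_imp (fun y => 0 < y)); [|now apply locally_pos].
    intros y Hy t _. exists (gap_integrand_dD y t). now apply is_derive_gap_integrand.
  - intros t _. apply (continuity_2d_pt_ext_loc (fun u v => gap_integrand_dD u v)).
    + exists (mkposreal D HD). intros u v Hu _. simpl in Hu. apply Rabs_def2 in Hu.
      symmetry. apply is_derive_unique, is_derive_gap_integrand. lra.
    + now apply continuity_2d_pt_gap_integrand_dD.
  - apply (filter_imp (fun y => 0 < y)); [|now apply locally_pos].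
    intros y Hy. apply ex_RInt_continuity_pt_all. intro; now apply continuity_pt_gap_integrand.
Qed.

Hypothesis phi_pos : forall y, 0 < y -> 0 < phi y.
Hypothesis dphi_neg : forall y, 0 < y -> dphi y < 0.

Lemma gap_integral_pos D : 0 < D -> 0 < gap_integral D.
Proof.
  intro HD. unfold gap_integral. apply RInt_gt_0; [lra| |].
  - intros x Hx. pose proof (mu_le_weight x). apply Rmult_lt_0_compat; [lra|].
    apply phi_pos, energy_pos. nra.
  - intros; now apply continuity_pt_continuous, continuity_pt_gap_integrand.
Qed.

Lemma gap_integral_dD_neg D : 0 < D -> gap_integral_dD D < 0.
Proof.
  intro HD. unfold gap_integral_dD.
  apply Rlt_le_trans with (RInt (fun _ => 0) 0 xm); [|rewrite RInt_const_R; lra].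
  apply RInt_lt; [lra| | |].
  - intros; apply continuity_pt_continuous, continuity_pt_cst.
  - intros; now apply continuity_pt_continuous, continuity_pt_gap_integrand_dD.
  - intros x Hx. unfold gap_integrand_dD. pose proof (energy_pos D x ltac:(nra)) as Hs.
    pose proof (mu_le_weight x). pose proof (dphi_neg _ Hs).
    assert (0 < D / energy D x) by (apply Rdiv_lt_0_compat; lra).
    assert (dphi (energy D x) * (D / energy D x) < 0) by nra. nra.
Qed.

Hypothesis mul_phi_deriv_nonneg : forall y, 0 < y -> 0 <= phi y + y * dphi y.

Lemma gap_integral_add_mul_dD_pos D : 0 < D -> 0 < gap_integral D + D * gap_integral_dD D.
Proof.
  intro HD. unfold gap_integral, gap_integral_dD.
  assert (ex_RInt (gap_integrand D) 0 xm)
    by (apply ex_RInt_continuity_pt_all; intro; now apply continuity_pt_gap_integrand).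
  assert (ex_RInt (gap_integrand_dD D) 0 xm)
    by (apply ex_RInt_continuity_pt_all; intro; now apply continuity_pt_gap_integrand_dD).
  rewrite <- RInt_add_scal by assumption.
  apply RInt_gt_0; [lra| |].
  - intros x Hx. unfold gap_integrand, gap_integrand_dD.
    pose proof (energy_pos D x ltac:(nra)) as Hs. pose proof (energy_sqr D x) as Hs2.
    pose proof (mu_le_weight x). set (s := energy D x) in *.
    replace (weight x * phi s + D * (weight x * (dphi s * (D / s))))
      with (weight x * (phi s + dphi s * (D ^ 2 / s))) by (field; lra).
    apply Rmult_lt_0_compat; [lra|].
    pose proof (mul_phi_deriv_nonneg s Hs). pose proof (dphi_neg s Hs).
    assert (D ^ 2 / s < s).
    { apply (Rmult_lt_reg_r s); [lra|]. replace (D ^ 2 / s * s) with (D ^ 2) by (field; lra). nra. }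
    nra.
  - intros x Hx. apply continuity_pt_continuous, continuity_pt_plus;
      [|apply continuity_pt_mult; [apply continuity_pt_cst|]];
      [apply continuity_pt_gap_integrand | apply continuity_pt_gap_integrand_dD]; auto.
Qed.

Hypothesis mul_phi_le_1 : forall y, 0 < y -> y * phi y <= 1.

Lemma gap_integral_le D : 0 < D -> gap_integral D <= xm * xm / D.
Proof.
  intro HD. unfold gap_integral. replace (xm * xm / D) with (xm / D * (xm - 0)) by (field; lra).
  rewrite <- RInt_const_R. apply RInt_le; [lra | | apply ex_RInt_const |].
  { apply ex_RInt_continuity_pt_all. intro; now apply continuity_pt_gap_integrand. }
  intros x Hx. unfold gap_integrand. pose proof (energy_pos D x ltac:(nra)) as Hs.
  pose proof (mu_le_weight x). pose proof (weight_le x ltac:(lra)).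
  pose proof (mul_phi_le_1 _ Hs). pose proof (phi_pos _ Hs). pose proof (energy_ge_D D x ltac:(lra)).
  assert (phi (energy D x) <= / D).
  { apply Rle_trans with (/ energy D x); [|apply Rinv_le_contravar; lra].
    apply (Rmult_le_reg_l (energy D x)); [lra|]. rewrite Rinv_r; lra. }
  unfold Rdiv. apply Rmult_le_compat; lra.
Qed.

Variable Phi : R -> R.
Hypothesis Phi_deriv : forall y, 0 < y -> is_derive Phi y (y * phi y).

Lemma RInt_mul_phi_energy D : 0 <= D ->
  RInt (fun x => x * phi (energy D x)) mu xm = Phi (energy D xm) - Phi (energy D mu).
Proof.
  intro HD. apply (RInt_of_is_derive (fun x => Phi (energy D x))); auto.
  - intros x Hx. pose proof (energy_pos D x ltac:(nra)).
    apply (is_derive_eq _ _ (x / energy D x * (energy D x * phi (energy D x)))); [field; lra|].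
    apply (is_derive_comp Phi (energy D)); auto. apply is_derive_energy_x. nra.
  - intros x Hx. apply continuity_pt_mult; [apply continuity_pt_id|].
    apply (continuity_pt_comp (energy D) phi); [apply continuity_pt_energy|].
    apply continuity_pt_phi, energy_pos. nra.
Qed.

Lemma gap_integral_split D : 0 < D -> gap_integral D =
  RInt (fun x => x * phi (energy D x)) mu xm + mu * RInt (fun x => phi (energy D x)) 0 mu.
Proof.
  intro HD. unfold gap_integral.
  assert (Hex : forall a b, ex_RInt (gap_integrand D) a b)
    by (intros; apply ex_RInt_continuity_pt_all; intro; now apply continuity_pt_gap_integrand).
  rewrite <- (@RInt_Chasles R_CompleteNormedModule _ 0 mu xm (Hex _ _) (Hex _ _)).
  rewrite <- RInt_scal_R.
  2: { apply ex_RInt_continuity_pt_all. intro; now apply continuity_pt_phi_energy. }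
  rewrite Rplus_comm. f_equal; apply RInt_ext; intros x Hx; rewrite Rmin_left, Rmax_right in Hx by lra;
    unfold gap_integrand; [rewrite weight_ge_mu | rewrite weight_le_mu]; lra.
Qed.

End GapIntegral.

(** * Zero temperature *)

Lemma IVT_level (F : R -> R) v a b : 0 < a < b -> (forall x, 0 < x -> continuity_pt F x) ->
  F b < v < F a -> exists p, a <= p <= b /\ F p = v.
Proof.
  intros Hab HF Hv.
  destruct (IVT_interv (fun D => v - F D) a b) as [p [Hp Ep]]; simpl; try lra.
  - intros x Hx. apply continuity_pt_minus; [apply continuity_pt_cst | apply HF; lra].
  - exists p. split; auto. lra.
Qed.

Lemma sqr_div_lt x l b : 0 < x -> 0 < l -> x * l < b -> x * x / b < x / l.
Proof.
  intros Hx Hl Hb. assert (0 < x * l) by nra.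
  apply (Rmult_lt_reg_r (b * l)); [nra|].
  replace (x * x / b * (b * l)) with (x * (x * l)) by (field; lra).
  replace (x / l * (b * l)) with (x * b) by (field; lra). nra.
Qed.

Lemma is_derive_Rinv_pos y : 0 < y -> is_derive Rinv y (- / y ^ 2).
Proof. intro Hy. auto_derive; [lra|]. field. lra. Qed.

Lemma continuity_pt_opp_inv_sqr y : 0 < y -> continuity_pt (fun y => - / y ^ 2) y.
Proof. intro Hy. apply ex_derive_continuity_pt. auto_derive. apply Rgt_not_eq. nra. Qed.

Lemma RInt_inv_energy D a : 0 < D -> 0 <= a ->
  RInt (fun x => / energy D x) 0 a = ln (a + energy D a) - ln D.
Proof.
  intros HD Ha.
  replace (ln D) with (ln (0 + energy D 0)) by (rewrite energy_0_r, Rplus_0_l; lra).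
  apply (RInt_of_is_derive (fun x => ln (x + energy D x))); auto.
  - intros x Hx. pose proof (energy_pos D x ltac:(nra)). pose proof (energy_ge_x D x ltac:(lra)).
    unfold energy in *. simpl in *. auto_derive; [repeat split; nra |]. field. lra.
  - intros x Hx. apply continuity_pt_inv; [apply continuity_pt_energy|].
    apply Rgt_not_eq, energy_pos. nra.
Qed.

Section ZeroTemperature.
Variables (xm lam mu : R).
Hypothesis xm_pos : 0 < xm.
Hypothesis lam_pos : 0 < lam.
Hypothesis mu_pos : 0 < mu.
Hypothesis mu_le_xm : mu <= xm.

Lemma F0_eq_gap_integral D : 0 < D -> F0 xm mu D = gap_integral mu xm Rinv D.
Proof.
  intro HD.
  rewrite (gap_integral_split mu xm Rinv _ mu_pos mu_le_xm is_derive_Rinv_pos D HD).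
  rewrite (RInt_mul_phi_energy mu xm Rinv _ mu_pos mu_le_xm is_derive_Rinv_pos (fun y => y)).
  - rewrite RInt_inv_energy by lra. unfold F0, energy.
    rewrite ln_div; [ring | | lra]. pose proof (sqrt_pos (mu ^ 2 + D ^ 2)). lra.
  - intros y Hy. rewrite Rinv_r by lra. exact (is_derive_id y).
  - lra.
Qed.

Lemma is_derive_F0 D : 0 < D -> is_derive (F0 xm mu) D (gap_integral_dD mu xm (fun y => - / y ^ 2) D).
Proof.
  intro HD. apply (is_derive_pos_ext _ (gap_integral mu xm Rinv)); auto.
  - exact F0_eq_gap_integral.
  - exact (is_derive_gap_integral mu xm _ _ is_derive_Rinv_pos continuity_pt_opp_inv_sqr D HD).
Qed.

Lemma F0_deriv_neg D : 0 < D -> gap_integral_dD mu xm (fun y => - / y ^ 2) D < 0.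
Proof.
  apply gap_integral_dD_neg; auto using continuity_pt_opp_inv_sqr.
  intros y Hy. assert (0 < / y ^ 2) by (apply Rinv_0_lt_compat; nra). lra.
Qed.

Lemma F0_add_mul_deriv_pos D : 0 < D -> 0 < F0 xm mu D + D * gap_integral_dD mu xm (fun y => - / y ^ 2) D.
Proof.
  intro HD. rewrite F0_eq_gap_integral by auto.
  apply (gap_integral_add_mul_dD_pos mu xm Rinv); auto using is_derive_Rinv_pos, continuity_pt_opp_inv_sqr.
  - intros y Hy. assert (0 < / y ^ 2) by (apply Rinv_0_lt_compat; nra). lra.
  - intros y Hy. apply Req_le. field. lra.
Qed.

(* For small [D] the logarithm dominates: [F0 a >= mu ln (mu / a) = xm / lam + mu]. *)
Lemma F0_gap_equation_solvable : exists p, 0 < p /\ F0 xm mu p = xm / lam.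
Proof.
  set (a := mu * exp (- (xm / (lam * mu)) - 1)).
  set (b := xm * lam + 1 + a).
  assert (Ha : 0 < a) by (apply Rmult_lt_0_compat; [lra | apply exp_pos]).
  assert (Hxl : 0 < xm * lam) by nra.
  assert (Fa : xm / lam < F0 xm mu a).
  { unfold F0.
    assert (sqrt (mu ^ 2 + a ^ 2) <= sqrt (xm ^ 2 + a ^ 2)) by (apply sqrt_le_1_alt; nra).
    pose proof (sqrt_pos (mu ^ 2 + a ^ 2)).
    assert (Hln : ln (mu / a) <= ln ((mu + sqrt (mu ^ 2 + a ^ 2)) / a)).
    { apply ln_le; [apply Rdiv_lt_0_compat; lra |]. unfold Rdiv. apply Rmult_le_compat_r; [|lra].
      left; apply Rinv_0_lt_compat; lra. }
    assert (Eln : mu * ln (mu / a) = xm / lam + mu).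
    { unfold a, Rdiv. rewrite ln_mult, ln_Rinv, ln_mult, ln_exp by (try apply Rinv_0_lt_compat;
        try apply Rmult_lt_0_compat; try apply exp_pos; lra). field. lra. }
    apply Rmult_le_compat_l with (r := mu) in Hln; lra. }
  assert (Fb : F0 xm mu b < xm / lam).
  { rewrite F0_eq_gap_integral by (unfold b; lra).
    eapply Rle_lt_trans; [apply (gap_integral_le mu xm Rinv _ mu_pos mu_le_xm is_derive_Rinv_pos) |].
    - intros y Hy. now apply Rinv_0_lt_compat.
    - intros y Hy. apply Req_le. field. lra.
    - unfold b; lra.
    - apply sqr_div_lt; unfold b; lra. }
  destruct (IVT_level (F0 xm mu) (xm / lam) a b) as [p [Hp Ep]]; [unfold b; lra | | lra |].
  - intros x Hx. exact (is_derive_continuity_pt _ _ _ (is_derive_F0 x Hx)).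
  - exists p. split; [lra | auto].
Qed.

Lemma zero_temperature_iteration (u : nat -> R) : 0 < u 0%nat ->
  (forall n, u (S n) = lam / xm * u n * F0 xm mu (u n)) ->
  monotone u /\
  exists us, 0 < us /\ Un_cv u us /\ xm / lam = F0 xm mu us /\
    (forall D, 0 < D -> xm / lam = F0 xm mu D -> D = us) /\ linear_conv u us.
Proof.
  intros Hu0 u_S. destruct F0_gap_equation_solvable as [p [Hp Ep]].
  assert (Hc : 0 < lam / xm) by (apply Rdiv_lt_0_compat; auto).
  assert (Hfix : lam / xm * F0 xm mu p = 1) by (rewrite Ep; field; lra).
  destruct (gap_iteration_cv (F0 xm mu) _ (lam / xm) Hc is_derive_F0 F0_deriv_neg
    F0_add_mul_deriv_pos u p Hp Hfix Hu0 u_S) as [Hm [Hcv Hl]].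
  split; auto. exists p. repeat split; auto.
  intros D HD ED. apply (gap_fun_injective (F0 xm mu) _ is_derive_F0 F0_deriv_neg); auto. lra.
Qed.

End ZeroTemperature.

(** * Positive temperature *)

Lemma Rint_eq_RInt (f : R -> R) (a b : R) : ex_RInt f a b -> Rint f a b = RInt f a b.
Proof.
  intro H. unfold Rint.
  assert (Ex : exists I, exists pr : Riemann_integrable f a b, RiemannInt pr = I)
    by (eexists; exists (ex_RInt_Reals_0 f a b H); reflexivity).
  destruct (epsilon_spec (inhabits 0) _ Ex) as [pr <-].
  symmetry. apply RInt_Reals.
Qed.

Lemma ex_RInt_tanhc a b : ex_RInt tanhc a b.
Proof. apply ex_RInt_continuity_pt_all, continuity_pt_tanhc. Qed.

Definition tanhc_integral (y : R) : R := RInt tanhc 0 y.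

Lemma is_derive_tanhc_integral y : is_derive tanhc_integral y (tanhc y).
Proof.
  apply (@is_derive_RInt R_NormedModule tanhc tanhc_integral 0 y).
  - apply filter_forall. intro z. apply (@RInt_correct R_CompleteNormedModule), ex_RInt_tanhc.
  - apply continuity_pt_continuous, continuity_pt_tanhc.
Qed.

Lemma tanhc_integral_sub_pos b : 0 < b -> 0 < tanhc_integral b - b * tanhc b.
Proof.
  intro Hb.
  assert (E : tanhc_integral b - b * tanhc b = RInt (fun x => tanhc x + -1 * tanhc b) 0 b).
  { rewrite (RInt_add_scal tanhc (fun _ => tanhc b)), RInt_const_R by
      (apply ex_RInt_continuity_pt_all; intro; auto using continuity_pt_tanhc, continuity_pt_cst).
    unfold tanhc_integral. ring. }
  rewrite E. apply RInt_gt_0; auto.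
  - intros x Hx. pose proof (tanhc_decreasing x b ltac:(lra) ltac:(lra)). lra.
  - intros x _. apply continuity_pt_continuous, continuity_pt_plus; [apply continuity_pt_tanhc|].
    apply continuity_pt_cst.
Qed.

Section PositiveTemperature.
Variable T : R.
Hypothesis T_pos : 0 < T.

(* [phiT y = tanh (y / 2T) / y] for [y > 0], and [phiT 0 = 1 / 2T]. *)
Definition phiT (y : R) : R := tanhc (y / (2 * T)) / (2 * T).

Definition dphiT (y : R) : R := tanhc' (y / (2 * T)) / (4 * T ^ 2).

Definition PhiT (y : R) : R := 2 * T * ln (cosh (y / (2 * T))).

Lemma is_derive_div_2T y : is_derive (fun y => y / (2 * T)) y (/ (2 * T)).
Proof. auto_derive; auto. field. lra. Qed.

Lemma phiT_eq y : 0 < y -> phiT y = tanh (y / (2 * T)) / y.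
Proof.
  intro Hy. unfold phiT. rewrite tanhc_eq; [field; lra|].
  apply Rgt_not_eq, Rdiv_lt_0_compat; lra.
Qed.

Lemma phiT_pos y : 0 <= y -> 0 < phiT y.
Proof.
  intro Hy. apply Rdiv_lt_0_compat; [apply tanhc_pos, Rdiv_le_0_compat|]; lra.
Qed.

Lemma phiT_antitone a b : 0 <= a -> a <= b -> phiT b <= phiT a.
Proof.
  intros Ha Hab. destruct (Req_dec a b) as [->|]; [lra|]. unfold phiT, Rdiv at 1 3.
  apply Rmult_le_compat_r; [left; apply Rinv_0_lt_compat; lra|].
  left; apply tanhc_decreasing; [apply Rdiv_le_0_compat; lra|].
  unfold Rdiv; apply Rmult_lt_compat_r; [apply Rinv_0_lt_compat|]; lra.
Qed.

Lemma continuity_pt_phiT y : continuity_pt phiT y.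
Proof.
  unfold phiT. apply continuity_pt_div; [| apply continuity_pt_cst | lra].
  apply (continuity_pt_comp (fun y => y / (2 * T)) tanhc); [|apply continuity_pt_tanhc].
  exact (is_derive_continuity_pt _ _ _ (is_derive_div_2T y)).
Qed.

Lemma continuity_pt_phiT_energy D x : continuity_pt (fun x => phiT (energy D x)) x.
Proof. apply (continuity_pt_comp (energy D)); [apply continuity_pt_energy | apply continuity_pt_phiT]. Qed.

Lemma is_derive_phiT y : 0 < y -> is_derive phiT y (dphiT y).
Proof.
  intro Hy. unfold phiT, dphiT.
  apply (is_derive_eq _ _ (/ (2 * T) * tanhc' (y / (2 * T)) * / (2 * T))); [field; lra|].
  apply (is_derive_comp (fun s => s / (2 * T)) (fun y => tanhc (y / (2 * T))) y).
  { apply is_derive_div_2T. }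
  apply (is_derive_comp tanhc (fun y => y / (2 * T)) y); [|apply is_derive_div_2T].
  apply is_derive_tanhc, Rgt_not_eq, Rdiv_lt_0_compat; lra.
Qed.

Lemma continuity_pt_dphiT y : 0 < y -> continuity_pt dphiT y.
Proof.
  intro Hy. unfold dphiT. apply continuity_pt_div; [| apply continuity_pt_cst | nra].
  apply (continuity_pt_comp (fun y => y / (2 * T)) tanhc').
  - exact (is_derive_continuity_pt _ _ _ (is_derive_div_2T y)).
  - apply continuity_pt_tanhc', Rgt_not_eq, Rdiv_lt_0_compat; lra.
Qed.

Lemma dphiT_neg y : 0 < y -> dphiT y < 0.
Proof.
  intro Hy. apply Rdiv_neg_pos; [|nra]. apply tanhc'_neg, Rdiv_lt_0_compat; lra.
Qed.

Lemma phiT_add_mul_dphiT_nonneg y : 0 < y -> 0 <= phiT y + y * dphiT y.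
Proof.
  intro Hy. unfold phiT, dphiT. set (z := y / (2 * T)).
  assert (Hz : z <> 0) by (apply Rgt_not_eq, Rdiv_lt_0_compat; lra).
  replace (tanhc z / (2 * T) + y * (tanhc' z / (4 * T ^ 2)))
    with ((tanhc z + z * tanhc' z) / (2 * T)) by (unfold z; field; lra).
  rewrite tanhc_add_mul_tanhc' by auto. pose proof (cosh_pos z).
  apply Rdiv_le_0_compat; [left; apply Rinv_0_lt_compat; nra | lra].
Qed.

Lemma mul_phiT_le_1 y : 0 < y -> y * phiT y <= 1.
Proof.
  intro Hy. unfold phiT. replace (y * (tanhc (y / (2 * T)) / (2 * T)))
    with (y / (2 * T) * tanhc (y / (2 * T))) by (field; lra).
  rewrite mul_tanhc. left; apply tanh_lt_1.
Qed.

Lemma is_derive_PhiT y : 0 < y -> is_derive PhiT y (y * phiT y).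
Proof.
  intro Hy. unfold PhiT. rewrite phiT_eq by auto.
  apply (is_derive_eq _ _ (2 * T * (/ (2 * T) * tanh (y / (2 * T))))); [field; lra|].
  apply is_derive_scal.
  apply (is_derive_comp (fun s => ln (cosh s)) (fun y => y / (2 * T))).
  - apply is_derive_ln_cosh.
  - apply is_derive_div_2T.
Qed.

Lemma RInt_phiT a : RInt phiT 0 a = tanhc_integral (a / (2 * T)).
Proof.
  unfold tanhc_integral.
  replace 0 with (/ (2 * T) * 0 + 0) at 2 by ring.
  replace (a / (2 * T)) with (/ (2 * T) * a + 0) by (field; lra).
  rewrite <- (RInt_comp_lin tanhc) by apply ex_RInt_tanhc.
  apply RInt_ext. intros x _. unfold phiT, scal; simpl; unfold mult; simpl.
  replace (/ (2 * T) * x + 0) with (x / (2 * T)) by (field; lra). field. lra.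
Qed.

End PositiveTemperature.

Section GapFunctions.
Variables (xm mu : R).
Hypothesis mu_pos : 0 < mu.
Hypothesis mu_le_xm : mu <= xm.

Lemma FT_split T D : 0 < T -> 0 < D -> FT xm mu T D =
  RInt (fun x => x * phiT T (energy D x)) mu xm + mu * RInt (fun x => phiT T (energy D x)) 0 mu.
Proof.
  intros HT HD.
  rewrite (RInt_mul_phi_energy mu xm (phiT T) (dphiT T) mu_pos mu_le_xm (is_derive_phiT T HT)
    (PhiT T) (is_derive_PhiT T HT)) by lra.
  assert (E : forall x, tanh (sqrt (x ^ 2 + D ^ 2) / (2 * T)) / sqrt (x ^ 2 + D ^ 2) = phiT T (energy D x))
    by (intro; rewrite phiT_eq; auto; apply energy_pos; nra).
  unfold FT, PhiT. rewrite ln_div by apply cosh_pos. rewrite Rint_eq_RInt.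
  - rewrite (RInt_ext _ _ _ _ (fun x _ => E x)). unfold energy. ring.
  - apply (ex_RInt_ext (fun x => phiT T (energy D x))); [intros; symmetry; apply E|].
    apply ex_RInt_continuity_pt_all. intro. now apply continuity_pt_phiT_energy.
Qed.

Lemma FT_eq_gap_integral T D : 0 < T -> 0 < D -> FT xm mu T D = gap_integral mu xm (phiT T) D.
Proof.
  intros HT HD. rewrite FT_split, (gap_integral_split mu xm (phiT T) (dphiT T)); auto.
  now apply is_derive_phiT.
Qed.

Lemma Rint_inv_mul_tanh T : 0 < T ->
  Rint (fun xi => / xi * tanh (xi / (2 * T))) 0 mu = RInt (phiT T) 0 mu.
Proof.
  intro HT.
  assert (E : forall xi, 0 < xi < mu -> phiT T xi = / xi * tanh (xi / (2 * T)))
    by (intros xi Hxi; rewrite phiT_eq by (auto; lra); field; lra).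
  rewrite Rint_eq_RInt.
  - symmetry. apply RInt_ext. intros x Hx. rewrite Rmin_left, Rmax_right in Hx by lra. now apply E.
  - apply (ex_RInt_ext (phiT T)); [intros x Hx; rewrite Rmin_left, Rmax_right in Hx by lra; now apply E|].
    apply ex_RInt_continuity_pt_all, continuity_pt_phiT, HT.
Qed.

Lemma Fc_split T : 0 < T -> Fc xm mu T = RInt (fun x => x * phiT T x) mu xm + mu * RInt (phiT T) 0 mu.
Proof.
  intro HT.
  pose proof (RInt_mul_phi_energy mu xm (phiT T) (dphiT T) mu_pos mu_le_xm (is_derive_phiT T HT)
    (PhiT T) (is_derive_PhiT T HT) 0 (Rle_refl 0)) as E.
  rewrite !energy_0_l in E by lra.
  rewrite (RInt_ext _ (fun x => x * phiT T x)) in E.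
  2: { intros x Hx. rewrite Rmin_left, Rmax_right in Hx by lra. rewrite energy_0_l by lra. reflexivity. }
  rewrite E. unfold Fc, PhiT. rewrite ln_div, Rint_inv_mul_tanh by (auto using cosh_pos). ring.
Qed.

Lemma Fc_eq T : 0 < T -> Fc xm mu T =
  2 * T * (ln (cosh (xm / (2 * T))) - ln (cosh (mu / (2 * T)))) + mu * tanhc_integral (mu / (2 * T)).
Proof.
  intro HT. unfold Fc. rewrite ln_div, Rint_inv_mul_tanh, RInt_phiT by (auto using cosh_pos). ring.
Qed.
End GapFunctions.

Lemma is_derive_const_div_2T c T : 0 < T -> is_derive (fun T => c / (2 * T)) T (- c / (2 * T ^ 2)).
Proof. intro HT. auto_derive; [lra|]. field. lra. Qed.

Lemma is_derive_id_mul_tanh y : is_derive (fun y => y * tanh y) y (tanh y + y / cosh y ^ 2).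
Proof.
  apply (is_derive_eq _ _ (1 * tanh y + y * / cosh y ^ 2)); [field; pose proof (cosh_pos y); lra|].
  apply (is_derive_mult (fun y => y) tanh);
    [exact (is_derive_id y) | apply is_derive_tanh | intros; apply Rmult_comm].
Qed.

(* [dFc] and [Fc + T dFc] decompose along these two functions of [xm / 2T] and [mu / 2T]. *)
Lemma ln_cosh_sub_mul_tanh_antitone a b : 0 <= b <= a ->
  ln (cosh a) - a * tanh a <= ln (cosh b) - b * tanh b.
Proof.
  intro Hab. assert (- (ln (cosh b) - b * tanh b) <= - (ln (cosh a) - a * tanh a)); [|lra].
  apply (le_of_deriv_nonneg (fun y => - (ln (cosh y) - y * tanh y)) (fun y => y / cosh y ^ 2));
    try lra.
  - intros y _. apply (is_derive_eq _ _ (- (tanh y - (tanh y + y / cosh y ^ 2)))); [ring|].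
    apply (is_derive_opp (fun y => ln (cosh y) - y * tanh y)).
    apply (is_derive_minus (fun y => ln (cosh y)) (fun y => y * tanh y));
      [apply is_derive_ln_cosh | apply is_derive_id_mul_tanh].
  - intros y Hy. pose proof (cosh_pos y). apply Rdiv_le_0_compat; nra.
Qed.

Lemma two_ln_cosh_sub_mul_tanh_monotone a b : 0 <= b <= a ->
  2 * ln (cosh b) - b * tanh b <= 2 * ln (cosh a) - a * tanh a.
Proof.
  intro Hab.
  apply (le_of_deriv_nonneg (fun y => 2 * ln (cosh y) - y * tanh y)
    (fun y => tanh y - y / cosh y ^ 2)); try lra.
  - intros y _. apply (is_derive_eq _ _ (2 * tanh y - (tanh y + y / cosh y ^ 2))); [ring|].
    apply (is_derive_minus (fun y => 2 * ln (cosh y)) (fun y => y * tanh y));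
      [apply is_derive_scal, is_derive_ln_cosh | apply is_derive_id_mul_tanh].
  - intros y Hy. destruct (Req_dec y 0) as [->|]; [rewrite tanh_0; unfold Rdiv; lra|].
    pose proof (id_div_cosh2_lt_tanh y ltac:(lra)). lra.
Qed.

Section CriticalTemperature.
Variables (xm mu : R).
Hypothesis mu_pos : 0 < mu.
Hypothesis mu_le_xm : mu <= xm.

Definition dFc (T : R) : R :=
  2 * (ln (cosh (xm / (2 * T))) - ln (cosh (mu / (2 * T))))
  - (xm * tanh (xm / (2 * T)) - mu * tanh (mu / (2 * T))) / T
  - mu * mu * tanhc (mu / (2 * T)) / (2 * T ^ 2).

Lemma is_derive_Fc T : 0 < T -> is_derive (Fc xm mu) T (dFc T).
Proof.
  intro HT.
  apply (is_derive_pos_ext _ (fun T => 2 * T * (ln (cosh (xm / (2 * T))) - ln (cosh (mu / (2 * T))))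
    + mu * tanhc_integral (mu / (2 * T)))); auto.
  { intros; now apply Fc_eq. }
  set (a := xm / (2 * T)). set (b := mu / (2 * T)).
  apply (is_derive_eq _ _ (2 * 1 * (ln (cosh a) - ln (cosh b))
    + 2 * T * (- xm / (2 * T ^ 2) * tanh a - - mu / (2 * T ^ 2) * tanh b)
    + mu * (- mu / (2 * T ^ 2) * tanhc b))); [unfold dFc, a, b; field; lra|].
  apply (is_derive_plus (fun T => 2 * T * (ln (cosh (xm / (2 * T))) - ln (cosh (mu / (2 * T)))))
    (fun T => mu * tanhc_integral (mu / (2 * T)))).
  - apply (is_derive_mult (fun T => 2 * T) (fun T => ln (cosh (xm / (2 * T))) - ln (cosh (mu / (2 * T)))));
      [exact (is_derive_scal _ T 2 1 (is_derive_id T)) | | intros; apply Rmult_comm].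
    apply (is_derive_minus (fun T => ln (cosh (xm / (2 * T)))) (fun T => ln (cosh (mu / (2 * T)))));
      apply (is_derive_comp (fun y => ln (cosh y))); auto using is_derive_ln_cosh, is_derive_const_div_2T.
  - apply is_derive_scal, (is_derive_comp tanhc_integral);
      auto using is_derive_tanhc_integral, is_derive_const_div_2T.
Qed.

Lemma dFc_neg T : 0 < T -> dFc T < 0.
Proof.
  intro HT. set (a := xm / (2 * T)). set (b := mu / (2 * T)).
  assert (Hb : 0 < b) by (apply Rdiv_lt_0_compat; lra).
  assert (Hba : b <= a) by (apply Rmult_le_compat_r; [left; apply Rinv_0_lt_compat|]; lra).
  assert (E : dFc T = 2 * ((ln (cosh a) - a * tanh a) - (ln (cosh b) - b * tanh b))
    - mu * mu * tanhc b / (2 * T ^ 2)) by (unfold dFc, a, b; field; lra).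
  rewrite E. pose proof (ln_cosh_sub_mul_tanh_antitone a b ltac:(lra)).
  assert (0 < mu * mu * tanhc b / (2 * T ^ 2))
    by (pose proof (tanhc_pos b ltac:(lra));
        apply Rdiv_lt_0_compat; [apply Rmult_lt_0_compat; [nra | lra] | nra]).
  lra.
Qed.

Lemma Fc_add_mul_dFc_pos T : 0 < T -> 0 < Fc xm mu T + T * dFc T.
Proof.
  intro HT. rewrite Fc_eq by auto. set (a := xm / (2 * T)). set (b := mu / (2 * T)).
  assert (Hb : 0 < b) by (apply Rdiv_lt_0_compat; lra).
  assert (Hba : b <= a) by (apply Rmult_le_compat_r; [left; apply Rinv_0_lt_compat|]; lra).
  replace (2 * T * (ln (cosh a) - ln (cosh b)) + mu * tanhc_integral b + T * dFc T)
    with (2 * T * ((2 * ln (cosh a) - a * tanh a) - (2 * ln (cosh b) - b * tanh b))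
          + mu * (tanhc_integral b - b * tanhc b)) by (unfold dFc, a, b; field; lra).
  pose proof (two_ln_cosh_sub_mul_tanh_monotone a b ltac:(lra)).
  pose proof (tanhc_integral_sub_pos b Hb).
  assert (0 < mu * (tanhc_integral b - b * tanhc b)) by (apply Rmult_lt_0_compat; lra). nra.
Qed.

Lemma Fc_decreasing a b : 0 < a -> a < b -> Fc xm mu b < Fc xm mu a.
Proof. exact (decreasing_of_deriv_neg (Fc xm mu) dFc is_derive_Fc dFc_neg a b). Qed.

End CriticalTemperature.

Lemma RInt_sub_le (f g h : R -> R) a b : a <= b ->
  (forall x, a <= x <= b -> continuity_pt f x) -> (forall x, a <= x <= b -> continuity_pt g x) ->
  (forall x, a <= x <= b -> continuity_pt h x) ->
  (forall x, a < x < b -> f x - g x <= h x) -> RInt f a b - RInt g a b <= RInt h a b.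
Proof.
  intros Hab Hf Hg Hh Hle.
  replace (RInt f a b - RInt g a b) with (RInt f a b + -1 * RInt g a b) by ring.
  rewrite <- (RInt_add_scal f g (-1)) by now apply ex_RInt_continuity_pt.
  apply RInt_le; auto.
  - apply ex_RInt_continuity_pt; auto. intros x Hx.
    apply continuity_pt_plus, continuity_pt_mult; auto using continuity_pt_cst.
  - apply ex_RInt_continuity_pt; auto.
  - intros x Hx. specialize (Hle x Hx). lra.
Qed.

Lemma RInt_sqr_div_sqr_le T D a b : 0 < T -> 0 < D -> 0 <= a <= b ->
  RInt (fun x => D ^ 2 / (T * (x + D) ^ 2)) a b <= D / T.
Proof.
  intros HT HD Hab.
  rewrite (RInt_of_is_derive (fun x => - (D ^ 2 / T) / (x + D))); try lra.
  - assert (0 < D ^ 2 / T / (b + D)) by (apply Rdiv_lt_0_compat; [apply Rdiv_lt_0_compat; nra | lra]).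
    assert (D ^ 2 / T / (a + D) <= D / T).
    { replace (D / T) with (D ^ 2 / T / D) by (field; lra). unfold Rdiv at 1 3.
      apply Rmult_le_compat_l; [left; apply Rdiv_lt_0_compat; nra | apply Rinv_le_contravar; lra]. }
    lra.
  - intros x Hx. auto_derive; [lra|]. field. split; lra.
  - intros x Hx. apply ex_derive_continuity_pt. auto_derive. apply Rgt_not_eq.
    apply Rmult_lt_0_compat; [lra | nra].
Qed.

(* By [tanh t <= t] and the monotonicity of [tanh], the left-hand side is at most
   [(s - x) / (2 T s)] with [s = energy D x]; the bound used instead integrates to [D / T]. *)
Lemma phiT_sub_phiT_energy_le T D x : 0 < T -> 0 < D -> 0 < x ->
  phiT T x - phiT T (energy D x) <= D ^ 2 / (T * (x + D) ^ 2).
Proof.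
  intros HT HD Hx. pose proof (energy_pos D x ltac:(nra)) as Hs.
  pose proof (energy_ge_x D x ltac:(lra)) as Hsx. pose proof (energy_sqr D x) as Hs2.
  set (s := energy D x) in *. rewrite !phiT_eq by lra.
  set (t := tanh (x / (2 * T))). set (t' := tanh (s / (2 * T))).
  assert (Ht0 : 0 <= t) by (left; apply tanh_pos, Rdiv_lt_0_compat; lra).
  assert (Htx : t <= x / (2 * T)) by (left; apply tanh_lt_id, Rdiv_lt_0_compat; lra).
  assert (Htt : t <= t').
  { destruct (Req_dec x s) as [E|]; [unfold t, t'; rewrite E; lra|].
    left. apply tanh_increasing. apply Rmult_lt_compat_r; [apply Rinv_0_lt_compat|]; lra. }
  assert (Hcompare : t / x - t' / s <= t * (s - x) / (x * s)).
  { assert (t / s <= t' / s) by (apply Rmult_le_compat_r; [left; apply Rinv_0_lt_compat|]; lra).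
    replace (t * (s - x) / (x * s)) with (t / x - t / s) by (field; lra). lra. }
  assert (Htanh_le_id : t * (s - x) / (x * s) <= (s - x) / (2 * T * s)).
  { replace ((s - x) / (2 * T * s)) with (x / (2 * T) * (s - x) / (x * s)) by (field; lra).
    apply Rmult_le_compat_r; [left; apply Rinv_0_lt_compat; nra|].
    apply Rmult_le_compat_r; lra. }
  assert (Hbound : (s - x) / (2 * T * s) <= D ^ 2 / (T * (x + D) ^ 2)).
  { apply (Rmult_le_reg_r (2 * T * s * (x + D) ^ 2)); [repeat apply Rmult_lt_0_compat; nra|].
    replace ((s - x) / (2 * T * s) * (2 * T * s * (x + D) ^ 2)) with ((s - x) * (x + D) ^ 2)
      by (field; lra).
    replace (D ^ 2 / (T * (x + D) ^ 2) * (2 * T * s * (x + D) ^ 2)) with (2 * s * D ^ 2)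
      by (field; nra).
    assert ((s - x) * (s + x) = D ^ 2) by nra.
    assert ((x + D) ^ 2 <= 2 * s * (s + x)) by nra.
    assert ((s - x) * (x + D) ^ 2 <= (s - x) * (2 * s * (s + x))) by (apply Rmult_le_compat_l; lra).
    nra. }
  lra.
Qed.

Section GapVersusCritical.
Variables (xm mu : R).
Hypothesis mu_pos : 0 < mu.
Hypothesis mu_le_xm : mu <= xm.
Variables (T D : R).
Hypothesis T_pos : 0 < T.
Hypothesis D_pos : 0 < D.

Lemma FT_le_Fc : FT xm mu T D <= Fc xm mu T.
Proof.
  rewrite FT_split, Fc_split by auto.
  assert (Hle : forall x, 0 <= x -> phiT T (energy D x) <= phiT T x)
    by (intros; apply phiT_antitone; auto using energy_ge_x).
  apply Rplus_le_compat; [|apply Rmult_le_compat_l; [lra|]]; apply RInt_le; try lra;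
    try (apply ex_RInt_continuity_pt_all; intro;
      auto using continuity_pt_phiT, continuity_pt_phiT_energy, continuity_pt_id_mul).
  - intros x Hx. apply Rmult_le_compat_l, Hle; lra.
  - intros x Hx. apply Hle. lra.
Qed.

Lemma Fc_sub_le_FT : Fc xm mu T - 2 * xm * D / T <= FT xm mu T D.
Proof.
  rewrite FT_split, Fc_split by auto.
  set (h x := D ^ 2 / (T * (x + D) ^ 2)).
  assert (Hh : forall x, 0 <= x -> continuity_pt h x).
  { intros x Hx. apply ex_derive_continuity_pt. unfold h. auto_derive.
    apply Rgt_not_eq, Rmult_lt_0_compat; [lra | nra]. }
  assert (A1 : RInt (fun x => x * phiT T x) mu xm - RInt (fun x => x * phiT T (energy D x)) mu xm
               <= xm * (D / T)).
  { apply Rle_trans with (RInt (fun x => xm * h x) mu xm).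
    - apply RInt_sub_le; auto using continuity_pt_phiT, continuity_pt_phiT_energy, continuity_pt_id_mul.
      + intros x Hx. apply continuity_pt_mult; [apply continuity_pt_cst | apply Hh; lra].
      + intros x Hx. pose proof (phiT_sub_phiT_energy_le T D x T_pos D_pos ltac:(lra)) as Hloss.
        assert (0 <= h x) by (apply Rdiv_le_0_compat; [nra | apply Rmult_lt_0_compat; nra]).
        fold (h x) in Hloss. nra.
    - rewrite RInt_scal_R by (apply ex_RInt_continuity_pt; [lra | intros; apply Hh; lra]).
      apply Rmult_le_compat_l; [lra | apply RInt_sqr_div_sqr_le; lra]. }
  assert (A2 : RInt (phiT T) 0 mu - RInt (fun x => phiT T (energy D x)) 0 mu <= D / T).
  { apply Rle_trans with (RInt h 0 mu); [|apply RInt_sqr_div_sqr_le; lra].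
    apply RInt_sub_le; auto using continuity_pt_phiT, continuity_pt_phiT_energy;
      [lra | intros; apply Hh; lra |].
    intros x Hx. now apply phiT_sub_phiT_energy_le. }
  assert (mu * (RInt (phiT T) 0 mu - RInt (fun x => phiT T (energy D x)) 0 mu) <= xm * (D / T)).
  { apply Rle_trans with (mu * (D / T)); [apply Rmult_le_compat_l; lra|].
    apply Rmult_le_compat_r; [left; apply Rdiv_lt_0_compat|]; lra. }
  replace (2 * xm * D / T) with (xm * (D / T) + xm * (D / T)) by (field; lra). lra.
Qed.

End GapVersusCritical.

(** * The three iterations *)

Section Iterations.
Variables (xm lam mu : R).
Hypothesis xm_pos : 0 < xm.
Hypothesis lam_pos : 0 < lam.
Hypothesis mu_pos : 0 < mu.
Hypothesis mu_le_xm : mu <= xm.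

Let c_pos : 0 < lam / xm.
Proof. now apply Rdiv_lt_0_compat. Qed.

Lemma critical_temperature_iteration Tc (tau : nat -> R) : is_Tc xm lam mu Tc ->
  0 < tau 0%nat -> (forall n, tau (S n) = lam / xm * tau n * Fc xm mu (tau n)) ->
  monotone tau /\ Un_cv tau Tc /\ linear_conv tau Tc.
Proof.
  intros [HTc [ETc _]] Htau0 tau_S.
  apply (gap_iteration_cv (Fc xm mu) (dFc xm mu) (lam / xm)); auto.
  - now apply is_derive_Fc.
  - now apply dFc_neg.
  - now apply Fc_add_mul_dFc_pos.
  - rewrite <- ETc. field. lra.
Qed.

Section FixedTemperature.
Variable T : R.
Hypothesis T_pos : 0 < T.

Let FT_deriv D : 0 < D -> is_derive (FT xm mu T) D (gap_integral_dD mu xm (dphiT T) D).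
Proof.
  intro HD. apply (is_derive_pos_ext _ (gap_integral mu xm (phiT T))); auto.
  - intros; now apply FT_eq_gap_integral.
  - apply is_derive_gap_integral; auto using is_derive_phiT, continuity_pt_dphiT.
Qed.

Let dFT_neg D : 0 < D -> gap_integral_dD mu xm (dphiT T) D < 0.
Proof. apply gap_integral_dD_neg; auto using continuity_pt_dphiT, dphiT_neg. Qed.

Lemma FT_decreasing a b : 0 < a -> a < b -> FT xm mu T b < FT xm mu T a.
Proof. exact (decreasing_of_deriv_neg _ _ FT_deriv dFT_neg a b). Qed.

Lemma FT_gap_equation_solvable : Fc xm mu T > xm / lam -> exists p, 0 < p /\ FT xm mu T p = xm / lam.
Proof.
  intro HFc. set (a := (Fc xm mu T - xm / lam) * T / (4 * xm)). set (b := xm * lam + 1 + a).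
  assert (Ha : 0 < a) by (apply Rdiv_lt_0_compat; [apply Rmult_lt_0_compat|]; lra).
  assert (Fa : xm / lam < FT xm mu T a).
  { pose proof (Fc_sub_le_FT xm mu mu_pos mu_le_xm T a T_pos Ha).
    assert (2 * xm * a / T = (Fc xm mu T - xm / lam) / 2) by (unfold a; field; lra). lra. }
  assert (Fb : FT xm mu T b < xm / lam).
  { rewrite FT_eq_gap_integral by (auto; unfold b; nra).
    eapply Rle_lt_trans; [apply (gap_integral_le mu xm (phiT T) (dphiT T)) |];
      auto using is_derive_phiT, mul_phiT_le_1; [intros; now apply phiT_pos, Rlt_le | unfold b; nra |].
    apply sqr_div_lt; unfold b; nra. }
  destruct (IVT_level (FT xm mu T) (xm / lam) a b) as [p [Hp Ep]]; [unfold b; nra | | lra |].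
  - intros x Hx. exact (is_derive_continuity_pt _ _ _ (FT_deriv x Hx)).
  - exists p. split; [lra | auto].
Qed.

Lemma FT_lt_of_Fc_le : Fc xm mu T <= xm / lam -> forall D, 0 < D -> FT xm mu T D < xm / lam.
Proof.
  intros HFc D HD. pose proof (FT_le_Fc xm mu mu_pos mu_le_xm T (D / 2) T_pos ltac:(lra)).
  pose proof (FT_decreasing (D / 2) D ltac:(lra) ltac:(lra)). lra.
Qed.

Lemma finite_temperature_iteration Tc (u : nat -> R) : is_Tc xm lam mu Tc ->
  0 < u 0%nat -> (forall n, u (S n) = lam / xm * u n * FT xm mu T (u n)) ->
  monotone u /\
  exists us, 0 <= us /\ Un_cv u us /\
    (T < Tc -> 0 < us /\ xm / lam = FT xm mu T us /\
       (forall D, 0 < D -> xm / lam = FT xm mu T D -> D = us) /\ linear_conv u us) /\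
    (Tc <= T -> us = 0 /\ (forall D, 0 < D -> xm / lam <> FT xm mu T D)).
Proof.
  intros [HTc [ETc _]] Hu0 u_S.
  assert (FT_add_mul_deriv_pos : forall D, 0 < D ->
            0 < FT xm mu T D + D * gap_integral_dD mu xm (dphiT T) D).
  { intros D HD. rewrite FT_eq_gap_integral by auto.
    apply (gap_integral_add_mul_dD_pos mu xm (phiT T));
      auto using is_derive_phiT, continuity_pt_dphiT, dphiT_neg, phiT_add_mul_dphiT_nonneg. }
  destruct (Rlt_le_dec T Tc) as [Hlt|Hge].
  - assert (HFc : Fc xm mu T > xm / lam) by (rewrite ETc; now apply Fc_decreasing).
    destruct (FT_gap_equation_solvable HFc) as [p [Hp Ep]].
    assert (Hfix : lam / xm * FT xm mu T p = 1) by (rewrite Ep; field; lra).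
    destruct (gap_iteration_cv _ _ _ c_pos FT_deriv dFT_neg FT_add_mul_deriv_pos u p Hp Hfix Hu0 u_S)
      as [Hm [Hcv Hl]].
    split; auto. exists p. repeat split; auto; try lra.
    intros D HD ED. apply (gap_fun_injective _ _ FT_deriv dFT_neg); auto. lra.
  - assert (HFc : Fc xm mu T <= xm / lam).
    { rewrite ETc. destruct (Req_dec T Tc) as [->|]; [lra|]. left; apply Fc_decreasing; lra. }
    pose proof (FT_lt_of_Fc_le HFc) as Hlt.
    destruct (gap_iteration_cv_zero _ _ _ c_pos FT_deriv u) as [Hm Hcv]; auto.
    + intros D HD. rewrite FT_eq_gap_integral by auto.
      apply (gap_integral_pos mu xm (phiT T) (dphiT T)); auto using is_derive_phiT.
      intros; now apply phiT_pos, Rlt_le.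
    + intros D HD. specialize (Hlt D HD). apply (Rmult_lt_reg_r (xm / lam)); [apply Rdiv_lt_0_compat; lra|].
      replace (lam / xm * FT xm mu T D * (xm / lam)) with (FT xm mu T D) by (field; lra). lra.
    + split; auto. exists 0. repeat split; auto; try lra.
      intros D HD E. specialize (Hlt D HD). lra.
Qed.

End FixedTemperature.
End Iterations.

Theorem theorem2 (xm lam mu Tc : R)
  (Hxm : 0 < xm) (Hlam : 0 < lam) (Hmu : 0 < mu <= xm)
  (HTc : is_Tc xm lam mu Tc) :
  (* (i) *)
  (forall u : nat -> R, 0 < u 0%nat ->
     (forall n, u (S n) = lam / xm * u n * F0 xm mu (u n)) ->
     monotone u /\
     exists us, 0 < us /\ Un_cv u us /\
       xm / lam = F0 xm mu us /\
       (forall D, 0 < D -> xm / lam = F0 xm mu D -> D = us) /\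
       linear_conv u us)
  /\
  (* (ii) *)
  (forall T, 0 < T -> forall u : nat -> R, 0 < u 0%nat ->
     (forall n, u (S n) = lam / xm * u n * FT xm mu T (u n)) ->
     monotone u /\
     exists us, 0 <= us /\ Un_cv u us /\
       (T < Tc ->
          0 < us /\ xm / lam = FT xm mu T us /\
          (forall D, 0 < D -> xm / lam = FT xm mu T D -> D = us) /\
          linear_conv u us) /\
       (Tc <= T ->
          us = 0 /\ (forall D, 0 < D -> xm / lam <> FT xm mu T D)))
  /\
  (* (iii) *)
  (forall tau : nat -> R, 0 < tau 0%nat ->
     (forall n, tau (S n) = lam / xm * tau n * Fc xm mu (tau n)) ->
     monotone tau /\ Un_cv tau Tc /\ linear_conv tau Tc).
Proof.
  destruct Hmu as [Hmu Hmu_xm]. split; [|split].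
  - intros u. now apply zero_temperature_iteration.
  - intros T HT u. now apply (finite_temperature_iteration xm lam mu Hxm Hlam Hmu Hmu_xm T HT Tc).
  - intros tau. now apply (critical_temperature_iteration xm lam mu Hxm Hlam Hmu Hmu_xm Tc).
Qed.
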